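(* Let $S$ be a string and let $i<j<k$ be positions such that $S[i\mathinner{.\,.}i']$, $S[j\mathinner{.\,.}j']$ and $S[k\mathinner{.\,.}k']$ are runs of $S$ having the same (smallest) period. Then $k>i'$.
   Context: An integer $p>0$ is a period of a string $P$ if $P[t]=P[t+p]$ for all $t\in[0,|P|-p)$; $\mathsf{per}(P)$ is the smallest period of $P$. A fragment $F=S[a\mathinner{.\,.}b]$ of $S$ is a run of $S$ if $\mathsf{per}(F)\leq |F|/2$ and $F$ cannot be extended by one position to the left or to the right within $S$ with its smallest period remaining the same. *)

From mathcomp Require Import all_boot.
Set Implicit Arguments. Unset Strict Implicit. Unset Printing Implicit Defensive.

Definition is_period (T : eqType) (P : seq T) (p : nat) : Prop :=
  0 < p /\ forall (x0 : T) (t : nat), t + p < size P -> nth x0 P t = nth x0 P (t + p).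

Definition is_per (T : eqType) (P : seq T) (p : nat) : Prop :=
  is_period P p /\ forall q, is_period P q -> p <= q.

(* The fragment S[a..b] (inclusive), meaningful when a <= b < |S|. *)
Definition frag (T : eqType) (S : seq T) (a b : nat) : seq T :=
  take (b.+1 - a) (drop a S).

Definition run_with_per (T : eqType) (S : seq T) (a b p : nat) : Prop :=
  [/\ a <= b < size S,
      is_per (frag S a b) p,
      2 * p <= size (frag S a b),
      (0 < a -> ~ is_per (frag S a.-1 b) p) &
      (b.+1 < size S -> ~ is_per (frag S a b.+1) p)].

(** Two runs with the same period p overlap on fewer than p positions: if a
   later run S[b..b'] started at least p positions before the end of an earlier
   run S[a..a'], then S[b-1] = S[b-1+p] would hold inside S[a..a'], so S[b-1..b']
   would still have smallest period p, contradicting the left maximality of the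
   later run.  Chaining this for (i, j) and (j, k), with |S[j..j']| >= 2p, pushes
   k beyond i'. *)

From mathcomp Require Import all_boot.
From mathcomp Require Import zify.

Set Implicit Arguments.
Unset Strict Implicit.

Section Fragments.

Variables (T : eqType) (S : seq T).

Lemma size_frag a b : b < size S -> size (frag S a b) = b.+1 - a.
Proof. by move=> lt_b; rewrite /frag size_takel // size_drop; lia. Qed.

Lemma nth_frag x0 a b t : t < b.+1 - a -> nth x0 (frag S a b) t = nth x0 S (a + t).
Proof. by move=> lt_t; rewrite /frag nth_take // nth_drop. Qed.

Lemma frag_periodP a b p : b < size S ->
  is_period (frag S a b) p <->
  0 < p /\ forall x0 t, a <= t -> t + p <= b -> nth x0 S t = nth x0 S (t + p).
Proof.
move=> lt_b; rewrite /is_period size_frag //; split=> -[p_gt0 per]; split=> // x0 t.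
- move=> le_at le_tb; have := per x0 (t - a); rewrite !nth_frag; try lia.
  by rewrite addnA subnKC //; apply; lia.
- move=> lt_t; rewrite !nth_frag; try lia.
  by rewrite addnA; apply: per; lia.
Qed.

Lemma frag_period_sub a b c d q :
  c <= a -> b <= d -> d < size S ->
  is_period (frag S c d) q -> is_period (frag S a b) q.
Proof.
move=> le_ca le_bd lt_d /frag_periodP-/(_ lt_d)[q_gt0 per].
apply/frag_periodP; first lia.
by split=> // x0 t le_at le_tb; apply: per; lia.
Qed.

Lemma run_size a b p : run_with_per S a b p -> 2 * p <= b.+1 - a.
Proof. by case=> /andP[_ lt_b] _ long _ _; rewrite size_frag in long. Qed.

Lemma run_overlap_lt_per a a' b b' p :
  a < b -> run_with_per S a a' p -> run_with_per S b b' p -> a'.+1 < b + p.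
Proof.
move=> lt_ab Ra Rb; rewrite ltnNge; apply/negP=> covered.
have long_b := run_size Rb.
case: Ra => /andP[_ lt_a'] [/frag_periodP-/(_ lt_a')[p_gt0 per_a] _] _ _ _.
case: Rb => /andP[_ lt_b'] [/frag_periodP-/(_ lt_b')[_ per_b] min_b] _ left_max _.
apply: left_max; first lia.
split=> [|q /(frag_period_sub (leq_pred b) (leqnn b') lt_b')]; last exact: min_b.
apply/frag_periodP => //; split=> // x0 t le_t le_tb'.
have [-> | lt_t] := eqVneq t b.-1; first by apply: per_a; lia.
by apply: per_b; lia.
Qed.

End Fragments.

Theorem lemma2 (T : eqType) (S : seq T) (i i' j j' k k' p : nat) :
  i < j -> j < k ->
  run_with_per S i i' p -> run_with_per S j j' p -> run_with_per S k k' p ->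
  k > i'.
Proof.
move=> lt_ij lt_jk Ri Rj Rk.
have := run_overlap_lt_per lt_ij Ri Rj.
have := run_overlap_lt_per lt_jk Rj Rk.
have := run_size Rj.
lia.
Qed.
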